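(* Let $g$ be any connected undirected graph with $n$ processors and diameter $diam(g)$, with unique identifiers $id_v \in \{0,\dots,n-1\}$. The protocol $\mathcal{EMSS}$ is self-stabilizing for the mutual exclusion specification $spec_{EM}$ under the unfair distributed daemon $did$.
   Context: Model (state model with shared variables): a distributed system is a connected undirected graph $g=(V,E)$ whose vertices are processors and edges are communication links; $vois(v)$ is the set of neighbours of $v$; $n=|V|$; $diam(g)$ is the diameter of $g$. Each processor $v$ has a unique identity $id_v\in\{0,\dots,n-1\}$. The state of a processor is the value of its variables; a configuration is the tuple of all processor states. A protocol is a set of rules $\langle guard\rangle \to \langle action\rangle$, where the guard is a predicate on the state of the processor and of its neighbours and the action updates the processor's own state. A processor is enabled if one of its guards is true. In a step, a daemon selects a nonempty subset of the enabled processors, and each selected processor atomically executes the action of a true guard, all selected processors reading the configuration at the beginning of the step. An execution is a maximal sequence of configurations linked by steps. The unfair distributed daemon $did$ imposes no constraint on the (nonempty) selected set. The synchronous daemon $ds$ selects all enabled processors at every step. Self-stabilization: a protocol $\pi$ is self-stabilizing for a specification $spec$ under daemon $d$ if, from any configuration, every execution of $\pi$ under $d$ contains a configuration from which every execution of $\pi$ under $d$ satisfies $spec$. Mutual exclusion: each processor $v$ has a predicate $privilege_v$; $v$ is privileged in a configuration $\gamma$ iff $privilege_v$ is true in $\gamma$; if $v$ is privileged in $\gamma$ and is activated during step $(\gamma,\gamma')$, then $v$ executes its critical section during that step. An execution satisfies $spec_{EM}$ if in every configuration at most one processor is privileged (safety) and every processor executes its critical section infinitely often (liveness). Protocol $\mathcal{EMSS}$.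 Let $K=(2n-1)(diam(g)+1)+2$. Bounded clock: the set $H=\{-n,-n+1,\dots,0,\dots,K-1\}$ with increment $\phi(c)=c+1$ if $c<0$ and $\phi(c)=(c+1)\bmod K$ if $c\ge 0$. For an integer $c$ let $\overline{c}\in\{0,\dots,K-1\}$ with $c\equiv \overline c \pmod K$; $d_K(c,c')=\min\{\overline{c-c'},\overline{c'-c}\}$; $c\le_l c'$ iff $0\le \overline{c'-c}\le 1$. Let $init=\{-n,\dots,0\}$, $init^*=\{-n,\dots,-1\}$, $stab=\{0,\dots,K-1\}$, and $\le_{init}$ the usual order of integers on $init$. Each processor $v$ has one variable $r_v\in H$. Predicates: $privilege_v \equiv (r_v = 2n + 2\,diam(g)\,id_v)$; $correct_v(u)\equiv (r_v\in stab)\wedge(r_u\in stab)\wedge(d_K(r_v,r_u)\le 1)$; $tousCorrects_v\equiv \forall u\in vois(v),\ correct_v(u)$; $etapeNorm_v\equiv tousCorrects_v\wedge \forall u\in vois(v),\ r_v\le_l r_u$; $reInit_v\equiv \neg tousCorrects_v \wedge r_v\notin init$; $etapeConv_v\equiv r_v\in init^*\wedge \forall u\in vois(v),\ (r_u\in init \wedge r_v\le_{init} r_u)$. Rules: $NA:: etapeNorm_v \to r_v:=\phi(r_v)$; $CA:: etapeConv_v\to r_v:=\phi(r_v)$; $RA:: reInit_v\to r_v:=-n$. *)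

From mathcomp Require Import all_boot.
From Stdlib Require Import ZArith.

Set Implicit Arguments.
Unset Strict Implicit.
Unset Printing Implicit Defensive.

Section EMSS.

(* The graph g = (V,E): V = T, E = e (symmetric, irreflexive).
   vois(v) = [pred u | e v u]. *)
Variables (T : finType) (e : rel T).

Fixpoint reach (k : nat) (u v : T) : bool :=
  match k with
  | 0 => u == v
  | k'.+1 => reach k' u v || [exists w, reach k' u w && e w v]
  end.

(* shortest-path distance (for a connected graph it is < #|T|) *)
Definition dist (u v : T) : nat := find (fun k => reach k u v) (iota 0 #|T|).

Definition diam : nat := \max_(u : T) \max_(v : T) dist u v.

Variable ident : T -> 'I_#|T|.

Definition config := T -> Z.

Definition nZ : Z := Z.of_nat #|T|.
Definition KZ : Z := ((2 * nZ - 1) * (Z.of_nat diam + 1) + 2)%Z.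

Definition inH (c : Z) : Prop := (- nZ <= c <= KZ - 1)%Z.
Definition valid_config (g : config) : Prop := forall v, inH (g v).

Definition phi (c : Z) : Z := if (c <? 0)%Z then (c + 1)%Z else ((c + 1) mod KZ)%Z.

Definition dK (c c' : Z) : Z := Z.min ((c - c') mod KZ) ((c' - c) mod KZ).
Definition le_l (c c' : Z) : Prop := (0 <= (c' - c) mod KZ <= 1)%Z.

Definition in_init (c : Z) : Prop := (- nZ <= c <= 0)%Z.
Definition in_init_star (c : Z) : Prop := (- nZ <= c <= -1)%Z.
Definition in_stab (c : Z) : Prop := (0 <= c <= KZ - 1)%Z.

Definition privilege (g : config) (v : T) : Prop :=
  g v = (2 * nZ + 2 * Z.of_nat diam * Z.of_nat (nat_of_ord (ident v)))%Z.

Definition correct (g : config) (v u : T) : Prop :=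
  in_stab (g v) /\ in_stab (g u) /\ (dK (g v) (g u) <= 1)%Z.

Definition tousCorrects (g : config) (v : T) : Prop :=
  forall u, e v u -> correct g v u.

Definition etapeNorm (g : config) (v : T) : Prop :=
  tousCorrects g v /\ forall u, e v u -> le_l (g v) (g u).

Definition reInit (g : config) (v : T) : Prop :=
  ~ tousCorrects g v /\ ~ in_init (g v).

Definition etapeConv (g : config) (v : T) : Prop :=
  in_init_star (g v) /\
  forall u, e v u -> in_init (g u) /\ (g v <= g u)%Z.

Definition enabled (g : config) (v : T) : Prop :=
  etapeNorm g v \/ etapeConv g v \/ reInit g v.

(* r' is the result of executing the action of a true guard of v in g
   (rules NA, CA, RA) *)
Definition action_result (g : config) (v : T) (r' : Z) : Prop :=
  (etapeNorm g v /\ r' = phi (g v)) \/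
  (etapeConv g v /\ r' = phi (g v)) \/
  (reInit g v /\ r' = (- nZ)%Z).

Definition step_did (g : config) (S : {set T}) (g' : config) : Prop :=
  S != set0 /\
  (forall v, v \in S -> enabled g v) /\
  (forall v, v \in S -> action_result g v (g' v)) /\
  (forall v, v \notin S -> g' v = g v).

Definition terminal (g : config) : Prop := forall v, ~ enabled g v.

(* A finite (maximal) execution ends in a terminal
   configuration; it is encoded by stuttering forever on that configuration
   with empty activated sets (no critical section is executed then). *)
Definition execution_did (c : nat -> config) (s : nat -> {set T}) : Prop :=
  forall i, step_did (c i) (s i) (c i.+1) \/
            (terminal (c i) /\ s i = set0 /\ c i.+1 = c i).

Definition executes_cs (c : nat -> config) (s : nat -> {set T}) (i : nat) (v : T)
  : Prop := privilege (c i) v /\ v \in s i.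

Definition spec_EM (c : nat -> config) (s : nat -> {set T}) : Prop :=
  (forall i, forall v w, privilege (c i) v -> privilege (c i) w -> v = w) /\
  (forall v, forall i, exists j, (i <= j)%N /\ executes_cs c s j v).

Definition self_stabilizing_EMSS_did : Prop :=
  forall (c : nat -> config) (s : nat -> {set T}),
    valid_config (c 0) -> execution_did c s ->
    exists i, forall (c' : nat -> config) (s' : nat -> {set T}),
      c' 0 = c i -> execution_did c' s' -> spec_EM c' s'.

End EMSS.

From mathcomp Require Import all_boot.
From Stdlib Require Import ZArith Lia.
From Stdlib Require Import Classical ClassicalEpsilon.
From mathcomp Require Import zify.

(* Clock values live in H = {-n..K-1}; on the "stable" part {0..K-1} a clock
   advances by [tick] (increment modulo K), on the "initial" part {-n..-1}
   it climbs towards 0, and a reset (rule RA) sends it to -n.  The proof has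
   three parts.
   1. Resets from the stable part happen only finitely often.  Every such
      reset of v, except the first one, has a "cause": a neighbour u reset
      earlier and still negative.  The cause stays frozen at -n while v is
      stable, and afterwards v's clock lags at most one behind u's; along a
      chain of j causes the clocks are therefore <= -n+j-1, so a chain of
      length n would revisit a processor with a positive clock, which is
      absurd.  Since causes occur strictly later, late resets would force
      arbitrarily long chains.
   2. Without resets, no processor is frozen forever (a frozen processor
      freezes its neighbours by a potential argument, hence everybody, which
      contradicts deadlock-freedom), so every clock reaches the stable part
      with all neighbours correct, and this property is closed: the
      execution reaches a legitimate configuration.
   3. Legitimate configurations are closed; in them the clocks of two
      processors at distance d differ by at most d modulo K, which keeps the
      privileged values 2n + 2 diam id apart (safety), and every clock keeps
      ticking through all of {0..K-1} (liveness). *)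

Set Implicit Arguments.
Unset Strict Implicit.
Unset Printing Implicit Defensive.

Ltac case_zcmp := repeat match goal with
 | |- context [if (?a <? ?b)%Z then _ else _] => case: (Z.ltb_spec0 a b) => ?
 | |- context [if (?a =? ?b)%Z then _ else _] => case: (Z.eqb_spec a b) => ?
 end.

Section Distances.
Variables (T : finType) (e : rel T).

Lemma reach_cons k x y z : e x y -> reach e k y z -> reach e k.+1 x z.
Proof.
move=> exy; elim: k z => [|k IH] z /=.
- move/eqP=> <-; apply/orP; right; apply/existsP; exists x; by rewrite eqxx exy.
- case/orP=> [h|/existsP [w /andP [h1 h2]]]; first by apply/orP; left; apply: IH.
  apply/orP; right; apply/existsP; exists w; by rewrite h2 andbT; apply: IH.
Qed.

Lemma reach_path x p : path e x p -> reach e (size p) x (last x p).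
Proof.
elim: p x => [|y p IH] x /=; first by rewrite eqxx.
by case/andP=> h1 h2; apply: reach_cons h1 (IH y h2).
Qed.

Lemma reach_short u w : connect e u w -> exists2 k, k < #|T| & reach e k u w.
Proof.
case/connectP=> p hp ->; case: (shortenP hp) => p' hp' hu _.
exists (size p'); last exact: reach_path.
by have := max_card (mem (u :: p')); rewrite (card_uniqP hu).
Qed.

Lemma reach_dist u w : connect e u w -> reach e (dist e u w) u w.
Proof.
case/reach_short=> k hk hr.
have hh : has (fun k => reach e k u w) (iota 0 #|T|).
  by apply/hasP; exists k; rewrite ?mem_iota.
have hf : find (fun k => reach e k u w) (iota 0 #|T|) < #|T|.
  by rewrite -[X in _ < X](size_iota 0 #|T|) -has_find.
by have := nth_find 0 hh; rewrite nth_iota // add0n.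
Qed.

Lemma dist_le_diam u w : dist e u w <= diam e.
Proof.
apply: leq_trans (leq_bigmax u).
exact: (leq_bigmax (F := fun v => dist e u v) w).
Qed.

End Distances.

Section Sequences.

Lemma last_before (P : nat -> Prop) a b : a <= b -> P a -> ~ P b ->
  exists tau, [/\ a <= tau, tau < b, P tau & forall k, tau < k <= b -> ~ P k].
Proof.
elim: b => [|b IH] hab hPa hPb.
  by move: hab; rewrite leqn0 => /eqP ha; subst a.
case: (ltngtP a b.+1) hab => // [hlt|heq] _; last by subst a.
case: (classic (P b)) => hPb'.
  exists b; split=> // k /andP [h1 h2].
  by have -> : k = b.+1 by apply/eqP; rewrite eqn_leq h2 h1.
have [tau [h1 h2 h3 h4]] := IH hlt hPa hPb'.
exists tau; split=> //; first exact: ltnW.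
move=> k /andP [hk1]; rewrite leq_eqVlt => /orP [/eqP -> //|hk2].
by apply: h4; rewrite hk1.
Qed.

Lemma first_after (P : nat -> Prop) k k' : k <= k' -> P k' ->
  exists k'', [/\ k <= k'', P k'' & forall j, k <= j < k'' -> ~ P j].
Proof.
move=> /subnKC <-; move: (k' - k) => d; elim: d k => [|d IH] k hP.
  by exists k; rewrite addn0 in hP; split=> // j /andP [h1 h2]; rewrite ltnNge h1 in h2.
case: (classic (P k)) => hPk.
  by exists k; split=> // j /andP [h1 h2]; rewrite ltnNge h1 in h2.
rewrite addnS -addSn in hP; have [k'' [h1 h2 h3]] := IH k.+1 hP.
exists k''; split=> //; first exact: ltnW.
move=> j /andP [hj1 hj2]; case: (ltngtP k j) hj1 => // [hkj|heq] _; last by rewrite -heq.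
by apply: h3; rewrite hkj.
Qed.

Lemma constant_between (f : nat -> Z) a b :
  (forall k, a <= k < b -> f k.+1 = f k) -> forall k, a <= k <= b -> f k = f a.
Proof.
move=> H; elim=> [|k IH] /andP [hk hkb]; first by move: hk; rewrite leqn0 => /eqP ->.
case: (ltngtP a k.+1) hk => // [hlt|heq] _; last by rewrite heq.
rewrite ltnS in hlt; by rewrite H ?IH ?hlt ?(ltnW hkb).
Qed.

Lemma nonincreasing_from (g : nat -> nat) k0 :
  (forall k, k0 <= k -> g k.+1 <= g k) -> forall k, k0 <= k -> g k <= g k0.
Proof.
move=> H; elim=> [|k IH]; first by rewrite leqn0 => /eqP ->.
rewrite leq_eqVlt => /orP [/eqP -> //|hk].
exact: leq_trans (H k hk) (IH hk).
Qed.

Lemma potential_stabilizes (f : nat -> Z) (pot : Z -> nat) k0 :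
  (forall k, k0 <= k -> pot (f k.+1) <= pot (f k) /\
     (f k.+1 <> f k -> pot (f k.+1) < pot (f k))) ->
  exists k1, k0 <= k1 /\ forall k, k1 <= k -> f k = f k1.
Proof.
have [m] := ubnP (pot (f k0)); elim: m k0 => [|m IH] // k0 hm H.
case: (classic (forall k, k0 <= k -> f k.+1 = f k)) => [hconst|hmoves].
  exists k0; split=> // k hk.
  apply: (@constant_between f k0 k); last by rewrite hk leqnn.
  by move=> j /andP [hj _]; apply: hconst.
have [k hk hmove] : exists2 k, k0 <= k & f k.+1 <> f k.
  apply: NNPP => hno; apply: hmoves => k hk.
  by apply: NNPP => hne; apply: hno; exists k.
have hdec := (H k hk).2 hmove.
have /= hle := @nonincreasing_from (fun j => pot (f j)) k0 (fun j hj => (H j hj).1) k hk.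
have hm' : pot (f k.+1) < m by lia.
have [k1 [hk1 hc]] := IH k.+1 hm' (fun j hj => H j (leq_trans hk (ltnW hj))).
by exists k1; split=> //; apply: leq_trans hk (ltnW hk1).
Qed.

Lemma uniform_bound (X : finType) (Q : X -> nat -> Prop) :
  (forall x b b', Q x b -> b <= b' -> Q x b') ->
  (forall x, exists b, Q x b) -> exists B, forall x, Q x B.
Proof.
move=> hmono hex.
pose f x := proj1_sig (constructive_indefinite_description _ (hex x)).
have hf x : Q x (f x) := proj2_sig (constructive_indefinite_description _ (hex x)).
by exists (\max_(x : X) f x) => x; apply: hmono (hf x) _; apply: leq_bigmax.
Qed.

End Sequences.

Section Protocol.
Variables (T : finType) (e : rel T).
Hypothesis n_pos : 0 < #|T|.
Local Notation n := (nZ T).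
Local Notation K := (KZ e).
Local Open Scope Z_scope.

Local Notation valid g := (forall v : T, - n <= g v <= K - 1).

Lemma n_ge1 : 1 <= n.
Proof. by rewrite /nZ; move/ltP: n_pos; lia. Qed.

Lemma K_gt_n : n < K.
Proof. have := n_ge1; have : 0 <= Z.of_nat (diam e) by lia. by rewrite /KZ; nia. Qed.

Lemma K_ge3 : 3 <= K.
Proof. have := n_ge1; have : 0 <= Z.of_nat (diam e) by lia. by rewrite /KZ; nia. Qed.

Lemma mod_K_cases z : -K <= z < K ->
  (0 <= z /\ z mod K = z) \/ (z < 0 /\ z mod K = z + K).
Proof.
move=> hz; have hK := K_ge3.
case: (Z.lt_ge_cases z 0) => hz0; last by left; split=> //; apply: Z.mod_small; lia.
right; split=> //; rewrite -(Z.mod_add z 1 K); last lia.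
by rewrite Z.mul_1_l; apply: Z.mod_small; lia.
Qed.

Definition tick (a : Z) : Z := if a =? K - 1 then 0 else a + 1.

Lemma tick_cases a : (a = K - 1 /\ tick a = 0) \/ (a <> K - 1 /\ tick a = a + 1).
Proof. by rewrite /tick; case: Z.eqb_spec; [left|right]. Qed.

Lemma phi_stab a : 0 <= a <= K - 1 -> phi e a = tick a.
Proof.
move=> ha; have hK := K_ge3; rewrite /phi /tick.
have -> : (a <? 0) = false by apply/Z.ltb_ge; lia.
case: Z.eqb_spec => [->|h]; last by apply: Z.mod_small; lia.
have -> : K - 1 + 1 = K by lia.
by apply: Z.mod_same; lia.
Qed.

Lemma phi_neg a : a < 0 -> phi e a = a + 1.
Proof. by move=> ha; rewrite /phi; have -> : (a <? 0) = true by apply/Z.ltb_lt. Qed.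

Lemma phi_ge0 a : 0 <= a -> 0 <= phi e a <= K - 1.
Proof.
move=> ha; have hK := K_ge3; rewrite /phi.
have -> : (a <? 0) = false by apply/Z.ltb_ge; lia.
by have := Z.mod_pos_bound (a + 1) K; lia.
Qed.

Lemma le_l_iff a b : 0 <= a <= K - 1 -> 0 <= b <= K - 1 ->
  (le_l e a b <-> b = a \/ b = tick a).
Proof.
move=> ha hb; have hK := K_ge3; rewrite /le_l /tick.
by have := mod_K_cases (z := b - a); case; first lia; case=> h1 ->; case: Z.eqb_spec; lia.
Qed.

Lemma dK_iff a b : 0 <= a <= K - 1 -> 0 <= b <= K - 1 ->
  (dK e a b <= 1 <-> b = a \/ b = tick a \/ a = tick b).
Proof.
move=> ha hb; have hK := K_ge3; rewrite /dK /tick.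
have := mod_K_cases (z := b - a); case; first lia; case=> h1 ->;
have := mod_K_cases (z := a - b); (case; first lia); case=> h2 ->;
by case: Z.eqb_spec; case: Z.eqb_spec; lia.
Qed.

Lemma correct_sym g v u : correct e g v u -> correct e g u v.
Proof. by rewrite /correct /dK; case=> [h1 [h2 h3]]; split=> //; split=> //; lia. Qed.

Definition local_step (g g' : config T) (v : T) : Prop :=
  g' v = g v \/ action_result e g v (g' v).

Lemma local_step_valid g g' v : valid g -> local_step g g' v -> - n <= g' v <= K - 1.
Proof.
move=> hval [->|]; first exact: hval.
have hn1 := n_ge1; have hK := K_ge3.
case=> [[_ ->]|[[_ ->]|[_ ->]]]; try lia;
by case: (Z.lt_ge_cases (g v) 0) => h;
  [rewrite phi_neg //; have := hval v; lia|have := phi_ge0 h; lia].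
Qed.

Lemma action_changes g w r : valid g -> action_result e g w r -> r <> g w.
Proof.
move=> hval; have hK := K_ge3.
have ticked : phi e (g w) <> g w.
  case: (Z.lt_ge_cases (g w) 0) => h; first by rewrite phi_neg; lia.
  have hs : 0 <= g w <= K - 1 by have := hval w; lia.
  by rewrite phi_stab //; have := tick_cases (g w); lia.
case=> [[_ ->]|[[_ ->]|[[_ hI] ->]]] //.
by rewrite /in_init in hI; have := hval w; have := n_ge1; lia.
Qed.

(* A nonnegative clock becomes negative only by a reset, which needs a
   positive clock (0 is an initial value). *)
Lemma reset_from_positive g g' x : local_step g g' x -> g' x < 0 -> 0 <= g x ->
  0 < g x /\ g' x = - n.
Proof.
move=> [->|]; first lia.
case=> [[_ ->]|[[_ ->]|[[_ hI] ->]]] h1 h2; try by have := phi_ge0 h2; lia.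
by split=> //; rewrite /in_init in hI; have := n_ge1; lia.
Qed.

Lemma stable_local_step g g' x : local_step g g' x -> 0 <= g x <= K - 1 -> 0 <= g' x ->
  g' x = g x \/ (etapeNorm e g x /\ g' x = phi e (g x)).
Proof.
move=> [->|]; first by left.
case=> [[hN ->]|[[[hC _] ->]|[_ ->]]] hx hx'; first by right.
  by rewrite /in_init_star in hC; lia.
by have := n_ge1; lia.
Qed.

Lemma nonpos_next_to_negative g g' v u : local_step g g' v -> e v u -> g u < 0 ->
  g v <= 0 -> g' v <= 0.
Proof.
move=> [->|] // + evu hu hv.
case=> [[[hT _] ->]|[[[hC _] ->]|[_ ->]]].
- by have := hT u evu; rewrite /correct /in_stab; lia.
- by rewrite phi_neg; rewrite /in_init_star in hC; lia.
- by have := n_ge1; lia.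
Qed.

Lemma negative_blocked g g' u v : valid g -> local_step g g' u -> e u v ->
  g u < 0 -> 0 < g v -> g' u = g u.
Proof.
move=> hval [->|] // + euv hu hv.
case=> [[[hT _] ->]|[[[_ hC] ->]|[[_ hI] ->]]].
- by have := hT v euv; rewrite /correct /in_stab; lia.
- by have := hC v euv; rewrite /in_init; lia.
- by exfalso; apply: hI; rewrite /in_init; have := hval u; lia.
Qed.

Lemma init_nondecreasing g g' v : valid g -> local_step g g' v -> g v <= 0 ->
  g v <= g' v.
Proof.
move=> hval [->|]; first lia.
case=> [[_ ->]|[[_ ->]|[[_ hI] ->]]] hv.
- 1,2: case: (Z.lt_ge_cases (g v) 0) => h; first by rewrite phi_neg; lia.
  1,2: by have := phi_ge0 h; lia.
- by exfalso; apply: hI; rewrite /in_init; have := hval v; lia.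
Qed.

Lemma lag_preserved g g' u v : valid g -> valid g' ->
  local_step g g' u -> local_step g g' v -> e u v ->
  g v <= 0 -> g' v <= 0 -> g u <= g v + 1 -> g' u <= g' v + 1.
Proof.
move=> hval hval' tu tv euv hv hv' huv.
have hm := init_nondecreasing hval tv hv; have hK := K_ge3.
case: tu => [->|]; first lia.
case=> [[[hT hL] ->]|[[[hC hC2] ->]|[_ ->]]].
- have := hT v euv; rewrite /correct /in_stab => -[hs1 [hs2 _]].
  have := (le_l_iff hs1 hs2).1 (hL v euv).
  by rewrite phi_stab //; have := tick_cases (g u); lia.
- by rewrite /in_init_star in hC; rewrite phi_neg; [have := hC2 v euv; lia|lia].
- by have := hval' v; lia.
Qed.

Hypothesis e_sym : symmetric e.
Hypothesis e_conn : forall u v : T, connect e u v.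

Lemma correct_preserved g g' v w : e v w -> correct e g v w ->
  (g' v = g v \/ (etapeNorm e g v /\ g' v = phi e (g v))) ->
  (g' w = g w \/ (etapeNorm e g w /\ g' w = phi e (g w))) ->
  correct e g' v w.
Proof.
move=> evw [ha [hb hd]] hv hw; have ewv : e w v by rewrite e_sym.
rewrite /in_stab in ha hb; have hK := K_ge3.
have hc := (dK_iff ha hb).1 hd.
have sa := tick_cases (g v); have sb := tick_cases (g w).
rewrite /correct /in_stab.
case: hv => [hv|[[_ hLv] hv]]; case: hw => [hw|[[_ hLw] hw]].
- by rewrite hv hw; split; [lia|split; [lia|]]; apply/(dK_iff ha hb); lia.
- have := (le_l_iff hb ha).1 (hLw v ewv); rewrite hv hw phi_stab // => hlw.
  have hn : 0 <= tick (g w) <= K - 1 by lia.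
  split; [lia|split; [lia|]]; apply/(dK_iff ha hn).
  by have := tick_cases (tick (g w)); lia.
- have := (le_l_iff ha hb).1 (hLv w evw); rewrite hv hw phi_stab // => hlv.
  have hn : 0 <= tick (g v) <= K - 1 by lia.
  split; [lia|split; [lia|]]; apply/(dK_iff hn hb).
  by have := tick_cases (tick (g v)); lia.
- have := (le_l_iff hb ha).1 (hLw v ewv); have := (le_l_iff ha hb).1 (hLv w evw).
  rewrite hv hw !phi_stab // => hlv hlw.
  have hn : 0 <= tick (g v) <= K - 1 by lia.
  have hn2 : 0 <= tick (g w) <= K - 1 by lia.
  split; [lia|split; [lia|]]; apply/(dK_iff hn hn2).
  by have := tick_cases (tick (g v)); have := tick_cases (tick (g w)); lia.
Qed.

Lemma argmin_exists (F : T -> nat) : exists v, forall w, (F v <= F w)%nat.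
Proof.
have [v0 _] := elimT card_gt0P n_pos.
by case: (@arg_minnP T v0 xpredT F isT) => v _ h; exists v => w; apply: h.
Qed.

(* Since K > n, some stable value is used by no processor. *)
Lemma unused_stable_value (g : config T) :
  exists2 c0, 0 <= c0 <= K - 1 & forall v, g v <> c0.
Proof.
apply: NNPP => hn.
have H (i : 'I_(Z.to_nat K)) : exists v, g v = Z.of_nat i.
  apply: NNPP => hi; apply: hn; exists (Z.of_nat i).
    by have := ltn_ord i; move/ltP; have := K_ge3; lia.
  by move=> v hv; apply: hi; exists v.
pose f i := proj1_sig (constructive_indefinite_description _ (H i)).
have hf i : g (f i) = Z.of_nat i :=
  proj2_sig (constructive_indefinite_description _ (H i)).
have inj : injective f by move=> i j hij; apply: val_inj => /=; have := hf i; rewrite hij hf; lia.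
have := leq_card f inj; rewrite card_ord; move/leP.
by have := K_gt_n; rewrite /nZ; lia.
Qed.

(* A processor with a minimal negative clock satisfies CA, or one of its
   neighbours must reset. *)
Lemma enabled_if_negative g : valid g -> (exists v, g v < 0) -> exists v, enabled e g v.
Proof.
move=> hval [vn hvn].
have [v hmin] := argmin_exists (fun v => Z.to_nat (g v + n)).
have hle w : g v <= g w by have := hmin w; move/leP; have := hval v; have := hval w; lia.
case: (classic (forall u, e v u -> in_init T (g u))) => [hall|hnot].
  exists v; right; left; split; first by rewrite /in_init_star; have := hle vn; have := hval v; lia.
  by move=> u hu; split; [apply: hall|apply: hle].
have [u hu hni] : exists2 u, e v u & ~ in_init T (g u).
  by apply: NNPP => hh; apply: hnot => u hu; apply: NNPP => hi; apply: hh; exists u.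
exists u; right; right; split=> // hT.
have := hT v; rewrite e_sym => /(_ hu); rewrite /correct /in_stab.
by have := hle vn; lia.
Qed.

Definition legitimate (g : config T) : Prop :=
  forall v, 0 <= g v <= K - 1 /\ tousCorrects e g v.

(* In a legitimate configuration, go round the cycle of stable values
   starting just after an unused value c0: the first clock met has no
   neighbour one step behind it, so it satisfies NA. *)
Lemma enabled_if_legitimate g : legitimate g -> exists v, etapeNorm e g v.
Proof.
move=> hL.
have [c0 hc0 hmiss] := unused_stable_value g.
pose key y := if c0 <? y then y - c0 - 1 else y - c0 - 1 + K.
have [v hmin] := argmin_exists (fun v => Z.to_nat (key (g v))).
exists v; split; first exact: (proj2 (hL v)).
move=> u hu; have hsv := proj1 (hL v); have hsu := proj1 (hL u).
apply/(le_l_iff hsv hsu).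
have := (dK_iff hsv hsu).1 (proj2 (proj2 (proj2 (hL v) u hu))).
have := hmin u; move/leP; rewrite /key.
have := hmiss u; have := hmiss v; have := tick_cases (g u); have := tick_cases (g v).
by have := K_ge3; case: (Z.ltb_spec c0 (g u)); case: (Z.ltb_spec c0 (g v)); lia.
Qed.

(* An incorrect link between nonnegative clocks has a positive end, which
   can reset. *)
Lemma enabled_if_incorrect g v : (forall v, 0 <= g v) -> ~ tousCorrects e g v ->
  exists v, enabled e g v.
Proof.
move=> hge hv.
have [u hu hcu] : exists2 u, e v u & ~ correct e g v u.
  apply: NNPP => hh; apply: hv => u hu.
  by apply: NNPP => hc; apply: hh; exists u.
case: (Z.lt_ge_cases 0 (g v)) => hv0.
  by exists v; right; right; split=> //; rewrite /in_init; lia.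
case: (Z.lt_ge_cases 0 (g u)) => hu0.
  exists u; right; right; split; last by rewrite /in_init; lia.
  by move=> hT; apply: hcu; apply: correct_sym; apply: hT; rewrite e_sym.
exfalso; apply: hcu.
have h1 : g v = 0 by have := hge v; lia.
have h2 : g u = 0 by have := hge u; lia.
rewrite /correct /in_stab /dK h1 h2 /=; have := K_ge3; split; [lia|split; [lia|]].
by rewrite Zmod_0_l; lia.
Qed.

Lemma deadlock_free g : valid g -> exists v, enabled e g v.
Proof.
move=> hval.
case: (classic (exists v, g v < 0)) => [hneg|hpos]; first exact: enabled_if_negative.
have hge v : 0 <= g v by apply: NNPP => h; apply: hpos; exists v; lia.
case: (classic (forall v, tousCorrects e g v)) => [hall|].
  have hL : legitimate g by move=> v; split; [have := hval v; have := hge v; lia|].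
  by have [v hv] := enabled_if_legitimate hL; exists v; left.
by move/not_all_ex_not=> [v hv]; apply: enabled_if_incorrect hge hv.
Qed.

Lemma leaves_init_by_NA g g' v : local_step g g' v -> g v <= 0 -> 0 < g' v ->
  etapeNorm e g v.
Proof.
case=> [->|]; first lia.
case=> [[hN _]|[[[hC _] ->]|[_ ->]]] // hv hv'.
  by rewrite phi_neg in hv'; rewrite /in_init_star in hC; lia.
by have := n_ge1; lia.
Qed.

Lemma legitimate_step_nonneg g g' v : legitimate g -> local_step g g' v -> 0 <= g' v.
Proof.
move=> hL [->|]; first by have := hL v; lia.
have hv := proj1 (hL v).
case=> [[_ ->]|[[_ ->]|[[hnT _] _]]]; try exact: (proj1 (phi_ge0 (proj1 hv))).
by exfalso; apply: hnT; apply: (proj2 (hL v)).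
Qed.

Section Execution.
Variables (c : nat -> config T) (sq : nat -> {set T}).
Hypothesis exec : execution_did e c sq.
Hypothesis valid0 : valid (c 0).

Lemma exec_local_step k v : local_step (c k) (c k.+1) v.
Proof.
case: (exec k) => [[_ [_ [hA hN]]]|[_ [_ ->]]]; last by left.
by case: (boolP (v \in sq k)) => hv; [right; apply: hA|left; apply: hN].
Qed.

Lemma moved_is_activated k v : c k.+1 v <> c k v -> v \in sq k.
Proof.
case: (exec k) => [[_ [_ [hA hN]]]|[_ [_ ->]]] //.
by case: (boolP (v \in sq k)) => // hv h; exfalso; apply: h; apply: hN.
Qed.

Lemma exec_valid k : valid (c k).
Proof. by elim: k => [|k IH] // v; apply: local_step_valid IH (exec_local_step k v). Qed.

Definition reset v t : Prop := 0 < c t v /\ c t.+1 v < 0.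

Lemma reset_value v t : reset v t -> c t.+1 v = - n.
Proof. by case=> h1 h2; have := reset_from_positive (exec_local_step t v) h2; lia. Qed.

Lemma reset_is_RA v t : reset v t -> reInit e (c t) v.
Proof.
case=> h1 h2; case: (exec_local_step t v) => [h|]; first lia.
by case=> [[_ h]|[[_ h]|[h _]]] //; have := phi_ge0 (Z.lt_le_incl _ _ h1); lia.
Qed.

Definition cause u s v t : Prop :=
  [/\ e u v, (s < t)%nat, reset u s, reset v t &
      forall k, (s < k <= t)%nat -> c k u < 0].

Lemma nonpos_while_neighbour_negative v u a b : e v u -> (a <= b)%nat ->
  (forall k, (a <= k < b)%nat -> c k u < 0) -> c a v <= 0 -> c b v <= 0.
Proof.
move=> evu; elim: b => [|b IH] hab hneg ha; first by move: hab; rewrite leqn0 => /eqP <-.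
case: (ltngtP a b.+1) hab => // [hlt|heq] _; last by rewrite -heq.
rewrite ltnS in hlt.
apply: nonpos_next_to_negative (exec_local_step b v) evu _ _; first by apply: hneg; rewrite hlt ltnSn.
by apply: IH => // k /andP [h1 h2]; apply: hneg; rewrite h1 ltnS (ltnW h2).
Qed.

(* While its effect v is stable, a cause is blocked at -n. *)
Lemma cause_frozen u s v t : cause u s v t ->
  forall k, (s < k <= t.+1)%nat -> c k u = - n.
Proof.
case=> euv hst hu hv hneg.
have hpos k : (s < k <= t)%nat -> 0 < c k v.
  case/andP=> h1 h2; apply: NNPP => hk.
  have : c t v <= 0.
    apply: (@nonpos_while_neighbour_negative v u k t) => //; first by rewrite e_sym.
      by move=> k' /andP [h1' h2']; apply: hneg; rewrite (leq_trans h1 h1') (ltnW h2').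
    lia.
  by case: hv; lia.
have hc k : (s.+1 <= k < t.+1)%nat -> c k.+1 u = c k u.
  by case/andP=> h1 h2; apply: negative_blocked (exec_valid k) (exec_local_step k u) euv _ _;
    [apply: hneg|apply: hpos]; rewrite h1 -ltnS.
move=> k hk; rewrite (constant_between hc hk); exact: reset_value.
Qed.

Lemma cause_lag u s v t : cause u s v t -> forall k, (t < k)%nat ->
  (forall k', (t < k' <= k)%nat -> c k' v <= 0) -> c k u <= c k v + 1.
Proof.
move=> hP; elim=> [|k IH] // hk hneg.
rewrite ltnS leq_eqVlt in hk; case/orP: hk => [/eqP <-|hlt].
  have [_ hst _ _ _] := hP.
  rewrite (cause_frozen hP); last by rewrite ltnS (ltnW hst) leqnn.
  by have := exec_valid t.+1 v; lia.
have [euv _ _ _ _] := hP.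
apply: (lag_preserved (exec_valid k) (exec_valid k.+1) (exec_local_step k u) (exec_local_step k v)) => //.
- by apply: hneg; rewrite hlt leqnSn.
- by apply: hneg; rewrite ltnS (ltnW hlt) leqnn.
- by apply: IH => // k' /andP [h1 h2]; apply: hneg; rewrite h1 (leq_trans h2).
Qed.

Lemma links_of_stable_processor v tau t :
  0 <= c tau v -> tousCorrects e (c tau) v ->
  (forall k, (tau < k <= t)%nat -> 0 < c k v) ->
  forall k, (tau <= k <= t)%nat ->
  forall w, e v w -> c k w < 0 \/ correct e (c k) v w.
Proof.
move=> hv0 hcorr hpos; elim=> [|k IH] /andP [hk hkt] w hw.
  by move: hk; rewrite leqn0 => /eqP htau; subst tau; right; apply: hcorr.
case: (ltngtP tau k.+1) hk => // [hlt|heq] _; last by subst tau; right; apply: hcorr.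
rewrite ltnS in hlt.
have hvk : 0 <= c k v <= K - 1.
  have := exec_valid k v; case: (ltngtP tau k) hlt => // [hl|heq] _; last by rewrite -heq; lia.
  by have := hpos k; rewrite hl (ltnW hkt); lia.
have hvk1 : 0 < c k.+1 v by apply: hpos; rewrite ltnS hlt hkt.
have hk' : (tau <= k <= t)%nat by rewrite hlt (ltnW hkt).
case: (IH hk' w hw) => [hneg|hcor].
  left; case: (ltngtP tau k) hlt => // [hl|heq] _.
    rewrite (negative_blocked (v := v) (exec_valid k) (exec_local_step k w)) //;
      first by rewrite e_sym.
    by apply: hpos; rewrite hl (ltnW hkt).
  by subst k; have := hcorr w hw; rewrite /correct /in_stab; lia.
case: (Z.lt_ge_cases (c k.+1 w) 0) => hw1; first by left.
right; apply: (correct_preserved hw hcor).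
  by apply: stable_local_step (exec_local_step k v) hvk _; lia.
apply: stable_local_step (exec_local_step k w) _ hw1.
by move: hcor; rewrite /correct /in_stab; lia.
Qed.

(* Every reset of v but the first has a cause: v left the initial part by
   NA with all links correct, and the link that made it reset later had
   become negative through a reset of the neighbour. *)
Lemma reset_has_cause v t t' : reset v t' -> (t' < t)%nat -> reset v t ->
  exists u s, cause u s v t.
Proof.
move=> hv' htt hv.
have [tau [h1 h2 h3 h4]] := @last_before (fun k => c k v <= 0) t'.+1 t htt
  (Z.lt_le_incl _ _ (proj2 hv')) (ltac:(move: (proj1 hv); lia)).
have hpos k : (tau < k <= t)%nat -> 0 < c k v by move=> hk; have := h4 k hk; lia.
have [w0 hw0 hnc0] : exists2 w, e v w & ~ correct e (c t) v w.
  have [hnT _] := reset_is_RA hv; apply: NNPP => hh; apply: hnT => w hw.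
  by apply: NNPP => hc; apply: hh; exists w.
have [hcorr _] := leaves_init_by_NA (exec_local_step tau v) h3 (hpos tau.+1 (ltac:(by rewrite ltnSn h2))).
have hw0tau : 0 <= c tau w0 /\ 0 <= c tau v.
  by have := hcorr w0 hw0; rewrite /correct /in_stab; lia.
have htt' : (tau <= t <= t)%nat by rewrite (ltnW h2) leqnn.
have [hw0neg|//] := links_of_stable_processor (proj2 hw0tau) hcorr hpos htt' hw0.
have [s [g1 g2 g3 g4]] := @last_before (fun k => 0 <= c k w0) tau t (ltnW h2)
  (proj1 hw0tau) (ltac:(simpl; lia)).
have hs1 : c s.+1 w0 < 0 by have := g4 s.+1; rewrite ltnSn g2; lia.
have [hs2 _] := reset_from_positive (exec_local_step s w0) hs1 g3.
exists w0, s; split=> //; first by rewrite e_sym.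
by move=> k hk; have := g4 k hk; lia.
Qed.

(* A cause determines the time of its effect: a second effect at a later
   time would find v still initial, as u stays negative in between. *)
Lemma cause_effect_time u s v t1 t2 : cause u s v t1 -> cause u s v t2 -> t1 = t2.
Proof.
have earlier ta tb : cause u s v ta -> cause u s v tb -> ~ (ta < tb)%nat.
  move=> [euv hs _ hva _] [_ _ _ hvb hnb] hab.
  have : c tb v <= 0.
    apply: (@nonpos_while_neighbour_negative v u ta.+1 tb) => //; first by rewrite e_sym.
      by move=> k /andP [k1 k2]; apply: hnb; rewrite (ltn_trans hs k1) (ltnW k2).
    by case: hva; lia.
  by case: hvb; lia.
move=> h1 h2; case: (ltngtP t1 t2) => [h|h|//]; exfalso.
  exact: earlier h1 h2 h.
exact: earlier h2 h1 h.
Qed.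

Lemma first_resets_bounded : exists T0, forall v t, reset v t ->
  (forall t', (t' < t)%nat -> ~ reset v t') -> (t <= T0)%nat.
Proof.
apply: (uniform_bound (Q := fun v b => forall t, reset v t ->
  (forall t', (t' < t)%nat -> ~ reset v t') -> (t <= b)%nat)).
  by move=> x b b' H hb t h1 h2; apply: leq_trans (H t h1 h2) hb.
move=> x; case: (classic (exists t0, reset x t0)) => [[t0 h0]|hno].
  by exists t0 => t h1 h2; rewrite leqNgt; apply/negP => h; apply: h2 t0 h h0.
by exists 0%nat => t h1; exfalso; apply: hno; exists t.
Qed.

Lemma effects_bounded T0 : exists B, forall u s v t, (s <= T0)%nat ->
  cause u s v t -> (t <= B)%nat.
Proof.
have single s0 : exists B, forall u v t, cause u s0 v t -> (t <= B)%nat.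
  pose Q (p : T * T) b := forall t, cause p.1 s0 p.2 t -> (t <= b)%nat.
  have Qmono x b b' : Q x b -> (b <= b')%nat -> Q x b'.
    by move=> H hb t h; apply: leq_trans (H t h) hb.
  have Qex x : exists b, Q x b.
    case: x => u v; case: (classic (exists t0, cause u s0 v t0)) => [[t0 h0]|hno].
      by exists t0 => t h; rewrite (cause_effect_time h h0).
    by exists 0%nat => t h; exfalso; apply: hno; exists t.
  have [B HB] := uniform_bound Qmono Qex.
  by exists B => u v t h; apply: (HB (u, v) t h).
elim: T0 => [|T0 [B IH]].
  have [B HB] := single 0%nat; exists B => u s v t.
  by rewrite leqn0 => /eqP ->; apply: HB.
have [B' HB'] := single T0.+1; exists (maxn B B') => u s v t hs h.
rewrite leq_eqVlt ltnS in hs; case/orP: hs => [/eqP hs|hs].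
  by subst s; apply: leq_trans (HB' _ _ _ h) (leq_maxr _ _).
by apply: leq_trans (IH _ _ _ _ hs h) (leq_maxl _ _).
Qed.

Fixpoint cause_chain (r : nat) (v : T) (t : nat) : Prop :=
  if r is r'.+1 then exists u s, cause u s v t /\ cause_chain r' u s else True.

Lemma late_resets_have_chains r : exists Tr, forall v t, reset v t ->
  (Tr < t)%nat -> cause_chain r v t.
Proof.
have [T0 HT0] := first_resets_bounded.
have has_cause v t : reset v t -> (T0 < t)%nat -> exists u s, cause u s v t.
  move=> hv ht; apply: NNPP => hno.
  have : (t <= T0)%nat.
    by apply: (HT0 v t hv) => t' h1 h2; apply: hno; apply: reset_has_cause h2 h1 hv.
  by rewrite leqNgt ht.
elim: r => [|r [Tr IH]]; first by exists 0%nat.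
have [B HB] := effects_bounded Tr.
exists (maxn T0 B) => v t hv; rewrite gtn_max => /andP [ht1 ht2].
have [u [s hP]] := has_cause v t hv ht1.
exists u, s; split=> //; have [_ _ hu _ _] := hP; apply: IH hu _.
by rewrite ltnNge; apply/negP => hs; have := HB _ _ _ _ hs hP; rewrite leqNgt ht2.
Qed.

Lemma chain_unfold m v t : cause_chain m v t -> exists (W : nat -> T) (Tm : nat -> nat),
  [/\ W m = v, Tm m = t &
      forall i, (i < m)%nat -> cause (W i) (Tm i) (W i.+1) (Tm i.+1)].
Proof.
elim: m v t => [|m IH] v t /=; first by exists (fun _ => v), (fun _ => t).
case=> u [s [hP hD]]; have [W [Tm [h1 h2 h3]]] := IH u s hD.
exists (fun i => if i == m.+1 then v else W i), (fun i => if i == m.+1 then t else Tm i).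
rewrite eqxx; split=> // i hi.
have -> : (i == m.+1) = false by apply/negbTE; rewrite neq_ltn hi.
rewrite ltnS leq_eqVlt in hi; case/orP: hi => [/eqP ->|hi]; first by rewrite eqxx h1 h2.
have -> : (i.+1 == m.+1) = false by apply/negbTE; rewrite neq_ltn ltnS hi.
exact: h3.
Qed.

Section Chain.
Variables (m : nat) (W : nat -> T) (Tm : nat -> nat).
Hypothesis chainP : forall i, (i < m)%nat -> cause (W i) (Tm i) (W i.+1) (Tm i.+1).

Lemma chain_times_increase a b : (a < b <= m)%nat -> (Tm a < Tm b)%nat.
Proof.
elim: b => [|b IH] // /andP [hab hb].
have [_ hlt _ _ _] := chainP hb.
rewrite ltnS leq_eqVlt in hab; case/orP: hab => [/eqP -> //|hab].
by apply: ltn_trans hlt; apply: IH; rewrite hab ltnW.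
Qed.

Lemma chain_clock_bound j a : (1 <= j)%nat -> (a + j <= m)%nat -> (m <= #|T|)%nat ->
  forall k, (Tm a < k <= Tm (a + j))%nat -> c k (W a) <= - n + Z.of_nat j - 1.
Proof.
move=> + + hm; elim: j a => [|j IH] // a _ haj k /andP [hk1 hk2].
have hPa : cause (W a) (Tm a) (W a.+1) (Tm a.+1).
  by apply: chainP; apply: leq_trans haj; rewrite addnS ltnS leq_addr.
case: (leqP k (Tm a.+1).+1) => hk.
  by rewrite (cause_frozen hPa) ?hk1 //; lia.
case: j IH haj hk2 => [|j] IH haj hk2.
  by move: hk2; rewrite addn1 => hk2; move: (leq_ltn_trans hk2 (ltnW hk)); rewrite ltnn.
have haj' : (a.+1 + j.+1 <= m)%nat by rewrite addSnnS.
rewrite -addSnnS in hk2.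
have hjn : Z.of_nat j.+2 <= n by rewrite /nZ; move: haj hm; lia.
have hlag : c k (W a) <= c k (W a.+1) + 1.
  apply: (cause_lag hPa (ltnW hk)) => k' /andP [h1 h2].
  by have := IH a.+1 isT haj' k'; rewrite h1 (leq_trans h2 hk2); lia.
by have := IH a.+1 isT haj' k; rewrite (ltn_trans (ltnSn _) hk) hk2; lia.
Qed.

(* A chain of #|T| causes would revisit a processor, whose clock would be
   both negative (by the bound above) and positive (as it resets). *)
Lemma chain_processors_distinct a b : (a < b <= m)%nat -> (m <= #|T|)%nat -> W a <> W b.
Proof.
move=> /andP [hab hb] hm heq.
have hj1 : (1 <= b - a)%nat by rewrite subn_gt0.
have hab' : (a + (b - a))%nat = b by rewrite subnKC // ltnW.
have := @chain_clock_bound (b - a) a hj1 (ltac:(by rewrite hab')) hm (Tm b).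
have hTab : (Tm a < Tm b)%nat by apply: chain_times_increase; rewrite hab hb.
rewrite hab' hTab leqnn heq => hneg.
have hb0 : (0 < b)%nat by apply: leq_ltn_trans hab.
have hlast : (b.-1 < m)%nat by rewrite prednK.
have [_ _ _ [hpos _] _] := chainP hlast; rewrite prednK // in hpos.
have : Z.of_nat (b - a) <= n by rewrite /nZ; move: hb hm; lia.
by lia.
Qed.

End Chain.

Lemma no_chain_of_length_n v t : ~ cause_chain #|T| v t.
Proof.
move/chain_unfold=> [W [Tm [_ _ hP]]].
pose f (i : 'I_#|T|.+1) := W i.
have finj : injective f.
  move=> i j hij; apply: val_inj => /=; have hi := ltn_ord i; have hj := ltn_ord j.
  case: (ltngtP i j) => // h; exfalso.
    by apply: (chain_processors_distinct hP _ (leqnn _) hij); rewrite h -ltnS.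
  by apply: (chain_processors_distinct hP _ (leqnn _) (esym hij)); rewrite h -ltnS.
by have := leq_card f finj; rewrite card_ord ltnn.
Qed.

Lemma resets_finite : exists TT, forall t, (TT <= t)%nat -> forall v, ~ reset v t.
Proof.
have [Tr HR] := late_resets_have_chains #|T|.
by exists Tr.+1 => t ht v hv; apply: (@no_chain_of_length_n v t); apply: HR.
Qed.

Definition no_reset_after (TT : nat) : Prop :=
  forall t, (TT <= t)%nat -> forall v, ~ reset v t.

Lemma nonneg_stays_nonneg TT k v : no_reset_after TT -> (TT <= k)%nat ->
  0 <= c k v -> 0 <= c k.+1 v.
Proof.
move=> hno hk h; apply: NNPP => h'.
have [h1 _] := reset_from_positive (exec_local_step k v) (ltac:(lia)) h.
by apply: (hno k hk v); split=> //; lia.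
Qed.

Definition eventually_constant (v : T) : Prop :=
  exists k1, forall k, (k1 <= k)%nat -> c k v = c k1 v.

(* Once v is constant at x, a neighbour u can only climb towards the stable
   part, then reach x or tick x and stop: the potential below decreases at
   each of its moves. *)
Lemma constancy_spreads TT v u : no_reset_after TT ->
  eventually_constant v -> e v u -> eventually_constant u.
Proof.
move=> hno [k1 hk1] evu; have euv : e u v by rewrite e_sym.
have hK := K_ge3; have hn1 := n_ge1.
pose x := c k1 v.
pose pot y := if y <? 0 then (Z.to_nat (- y) + 2)%nat
              else if y =? x then 1%nat else if x =? tick y then 2%nat else 0%nat.
suff Hpot k : (maxn k1 TT <= k)%nat -> (pot (c k.+1 u) <= pot (c k u))%nat /\
    (c k.+1 u <> c k u -> (pot (c k.+1 u) < pot (c k u))%nat).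
  by have [k2 [_ hk2]] := potential_stabilizes Hpot; exists k2.
rewrite geq_max => /andP [hka hkb].
have hvx : c k v = x by rewrite /x hk1.
case: (exec_local_step k u) => [->|hact]; first by split=> //; rewrite ltnn.
case: (Z.lt_ge_cases (c k u) 0) => hu.
  have hnew : c k.+1 u = c k u + 1.
    case: hact => [[[hT _] ->]|[[_ ->]|[[_ hI] ->]]].
    - by have := hT v euv; rewrite /correct /in_stab; lia.
    - by rewrite phi_neg.
    - by exfalso; apply: hI; rewrite /in_init; have := exec_valid k u; lia.
  by rewrite hnew /pot; case_zcmp; (split; [|move=> ?]); lia.
have hu1 := nonneg_stays_nonneg hno hkb hu.
have hsu : 0 <= c k u <= K - 1 by have := exec_valid k u; lia.
case: (stable_local_step (exec_local_step k u) hsu hu1) => [->|[[hT hL] hnew]].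
  by split=> //; rewrite ltnn.
have := hT v euv; rewrite /correct /in_stab => -[_ [hsv _]].
have := (le_l_iff hsu hsv).1 (hL v euv); rewrite hnew phi_stab // hvx.
have hn : 0 <= tick (c k u) <= K - 1 by have := tick_cases (c k u); lia.
have := tick_cases (tick (c k u)); have := tick_cases (c k u).
rewrite /pot; move: (tick (tick (c k u))) (tick (c k u)) => t2 t1 hs1 hs2 hcase.
by case_zcmp; (split; [|move=> ?]); lia.
Qed.

Lemma constancy_everywhere TT v : no_reset_after TT ->
  eventually_constant v -> forall w, eventually_constant w.
Proof.
move=> hno hv w; case/connectP: (e_conn v w) => p hp ->.
elim: p v hv hp {w} => [|y p IH] v hv //= /andP [h1 h2].
by apply: IH h2; apply: constancy_spreads hno hv h1.
Qed.

(* If every clock were eventually constant, the daemon would still activate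
   some processor, whose action changes its clock. *)
Lemma not_all_eventually_constant : ~ (forall w, eventually_constant w).
Proof.
move=> hall.
have mono w b b' : (forall k, (b <= k)%nat -> c k w = c b w) -> (b <= b')%nat ->
    forall k, (b' <= k)%nat -> c k w = c b' w.
  by move=> H hb k hk; rewrite H ?(leq_trans hb hk) // H.
have [B HB] := uniform_bound mono hall.
have [v hen] := deadlock_free (exec_valid B).
case: (exec B) => [[hS [_ [hA _]]]|[hT _]]; last exact: hT v hen.
case/set0Pn: hS => w hw.
by apply: (action_changes (exec_valid B) (hA w hw)); rewrite (HB w B.+1).
Qed.

Lemma keeps_moving TT : no_reset_after TT ->
  forall v k, exists k', (k <= k')%nat /\ c k'.+1 v <> c k' v.
Proof.
move=> hno v k; apply: NNPP => hh.
apply: not_all_eventually_constant; apply: (constancy_everywhere hno (v := v)).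
exists k => k' hk'.
apply: (@constant_between (fun j => c j v) k k'); last by rewrite hk' leqnn.
by move=> j /andP [hj _]; apply: NNPP => hne; apply: hh; exists j.
Qed.

Definition locally_legitimate (k : nat) (v : T) : Prop :=
  0 <= c k v <= K - 1 /\ tousCorrects e (c k) v.

(* Without resets, stable clocks move only by NA, which preserves
   correctness of links. *)
Lemma locally_legitimate_persists TT k v : no_reset_after TT -> (TT <= k)%nat ->
  locally_legitimate k v -> locally_legitimate k.+1 v.
Proof.
move=> hno hk [hs hT].
have hkv := stable_local_step (exec_local_step k v) hs (nonneg_stays_nonneg hno hk (proj1 hs)).
split; first by case: hkv => [->|[_ ->]] //; apply: phi_ge0 (proj1 hs).
move=> w hw; have hc := hT w hw.
have [_ [hsw _]] := hc.
apply: (correct_preserved hw hc hkv).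
apply: (stable_local_step (exec_local_step k w) hsw).
by apply: (nonneg_stays_nonneg hno hk); case: hsw.
Qed.

(* A processor that never becomes locally legitimate would climb to a
   nonnegative value and then be stuck, since its only possible move, NA,
   would make it locally legitimate. *)
Lemma eventually_locally_legitimate TT v : no_reset_after TT ->
  exists k, (TT <= k)%nat /\ locally_legitimate k v.
Proof.
move=> hno; apply: NNPP => hh.
pose pot y := if y <? 0 then Z.to_nat (- y) else 0%nat.
suff Hpot k : (TT <= k)%nat -> (pot (c k.+1 v) <= pot (c k v))%nat /\
    (c k.+1 v <> c k v -> (pot (c k.+1 v) < pot (c k v))%nat).
  have [k1 [hk1 hc]] := potential_stabilizes Hpot.
  have [k' [hk' hne]] := keeps_moving hno v k1; apply: hne.
  by rewrite (hc k'.+1) ?(hc k') // leqW.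
move=> hk; case: (exec_local_step k v) => [->|hact]; first by split=> //; rewrite ltnn.
case: (Z.lt_ge_cases (c k v) 0) => hv.
  have hnew : c k.+1 v = c k v + 1.
    case: hact => [[_ ->]|[[_ ->]|[[_ hI] ->]]]; try by rewrite phi_neg.
    by exfalso; apply: hI; rewrite /in_init; have := exec_valid k v; lia.
  by rewrite hnew /pot; case_zcmp; (split; [|move=> ?]); lia.
exfalso; apply: hh; exists k; split=> //.
have hsv : 0 <= c k v <= K - 1 by have := exec_valid k v; lia.
case: (stable_local_step (exec_local_step k v) hsv (nonneg_stays_nonneg hno hk hv)) => [h|[[hT _] _]].
  by exfalso; apply: (action_changes (exec_valid k) hact h).
by split.
Qed.

Lemma reaches_legitimate : exists i, legitimate (c i).
Proof.
have [TT hTT] := resets_finite.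
suff [B HB] : exists B, forall v k, (B <= k)%nat -> locally_legitimate k v.
  by exists B => v; apply: HB v B (leqnn B).
apply: (uniform_bound (Q := fun v b => forall k, (b <= k)%nat -> locally_legitimate k v)).
  by move=> v b b' H hb k hk; apply: H; apply: leq_trans hb hk.
move=> v; have [k [hk hP]] := eventually_locally_legitimate v hTT.
exists k; elim=> [|k' IH] hk'; first by move: hk'; rewrite leqn0 => /eqP <-.
rewrite leq_eqVlt in hk'; case/orP: hk' => [/eqP <- //|hk'].
by apply: (locally_legitimate_persists hTT (leq_trans hk hk')); apply: IH.
Qed.

Section Legitimate.
Hypothesis legit0 : legitimate (c 0).

(* Legitimacy is closed: stable clocks only tick by NA, preserving links. *)
Lemma legitimate_closed k : legitimate (c k).
Proof.
elim: k => [//|k IH] v.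
have [hs hT] := IH v.
have stays w : 0 <= c k w <= K - 1 ->
    c k.+1 w = c k w \/ (etapeNorm e (c k) w /\ c k.+1 w = phi e (c k w)).
  by move=> hw; apply: stable_local_step (exec_local_step k w) hw
    (legitimate_step_nonneg IH (exec_local_step k w)).
split; first by case: (stays v hs) => [->|[_ ->]] //; apply: phi_ge0 (proj1 hs).
by move=> w hw; apply: correct_preserved hw (hT w hw) (stays v hs) (stays w (proj1 (IH w))).
Qed.

Lemma next_move_is_tick i v : exists k,
  [/\ (i <= k)%nat, c k v = c i v, v \in sq k & c k.+1 v = tick (c i v)].
Proof.
have hno : no_reset_after 0.
  by move=> t _ w [_ h]; have := legitimate_step_nonneg (legitimate_closed t) (exec_local_step t w); lia.
have [k0 [hk0 hne0]] := keeps_moving hno v i.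
have [k [hk hne hmin]] := @first_after (fun j => c j.+1 v <> c j v) i k0 hk0 hne0.
have hconst : c k v = c i v.
  apply: (@constant_between (fun j => c j v) i k); last by rewrite hk leqnn.
  by move=> j hj; apply: NNPP; apply: hmin.
exists k; split=> //; first exact: moved_is_activated.
have hs := proj1 (legitimate_closed k v).
case: (stable_local_step (exec_local_step k v) hs
        (legitimate_step_nonneg (legitimate_closed k) (exec_local_step k v))) => [h|[_ ->]].
  by exfalso; apply: hne.
by rewrite phi_stab // hconst.
Qed.

Lemma reaches_every_value v p : 0 <= p <= K - 1 -> forall i,
  exists j, [/\ (i <= j)%nat, c j v = p & v \in sq j].
Proof.
move=> hp; have hK := K_ge3.
pose gap k := Z.to_nat (if c k v <=? p then p - c k v else p - c k v + K).
suff H M i : (gap i <= M)%nat -> exists j, [/\ (i <= j)%nat, c j v = p & v \in sq j].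
  by move=> i; apply: H (leqnn _).
elim: M i => [|M IH] i hgap; have [k [hik hk hin hnext]] := next_move_is_tick i v.
all: case: (Z.eq_dec (c i v) p) => hy; first by exists k; rewrite hk hy.
all: have hsv := proj1 (legitimate_closed i v).
  by exfalso; move: hgap; rewrite /gap; case: Z.leb_spec0; lia.
have [|j [hj1 hj2 hj3]] := IH k.+1.
  by move: hgap; rewrite /gap hnext; have := tick_cases (c i v); case: Z.leb_spec0; case: Z.leb_spec0; lia.
by exists j; split=> //; apply: leq_trans hj1; apply: leq_trans hik (leqnSn _).
Qed.

End Legitimate.
End Execution.

Lemma correct_link_gap g x w : correct e g x w ->
  exists z q, -1 <= z <= 1 /\ g w - g x = z + q * K.
Proof.
case=> hsx [hsw hd]; have := (dK_iff hsx hsw).1 hd.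
have := tick_cases (g x); have := tick_cases (g w); case=> [[a1 a2]|[a1 a2]]; case=> [[b1 b2]|[b1 b2]].
all: case=> [e1|[e2|e3]]; [exists 0, 0; lia| |].
all: try by exists 1, (-1); lia.
all: try by exists 1, 0; lia.
all: try by exists (-1), 1; lia.
all: by exists (-1), 0; lia.
Qed.

Lemma legitimate_clock_gap g : legitimate g -> forall k u w, reach e k u w ->
  exists z q, - Z.of_nat k <= z <= Z.of_nat k /\ g w - g u = z + q * K.
Proof.
move=> hL; elim=> [|k IH] u w /=; first by move/eqP=> ->; exists 0, 0; lia.
case/orP=> [/IH [z [q hzq]]|/existsP [x /andP [h1 h2]]]; first by exists z, q; lia.
have [z [q [hz hq]]] := IH u x h1.
have [z' [q' [hz' hq']]] := correct_link_gap (proj2 (hL x) w h2).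
by exists (z + z'), (q + q'); lia.
Qed.

(* Two privileged values 2n + 2D id differ by at least 2D and at most
   2D(n-1), which keeps them at distance more than D modulo
   K = (2n-1)(D+1)+2. *)
Lemma privileged_values_apart (n' D iv iw z q : Z) : 1 <= D ->
  0 <= iv <= n' - 1 -> 0 <= iw <= n' - 1 -> iv <> iw -> -D <= z <= D ->
  2 * D * iw - 2 * D * iv <> z + q * ((2 * n' - 1) * (D + 1) + 2).
Proof.
move=> hD hiv hiw hne hz hq.
set K' := (2 * n' - 1) * (D + 1) + 2 in hq.
have hK : K' = 2 * n' * D + 2 * n' - D + 1 by rewrite /K'; ring.
have hdelta : - (2 * D * (n' - 1)) <= 2 * D * iw - 2 * D * iv <= 2 * D * (n' - 1) by nia.
have hfar : 2 * D <= 2 * D * iw - 2 * D * iv \/ 2 * D * iw - 2 * D * iv <= - (2 * D).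
  by case: (Z.lt_ge_cases iv iw) => h; [left|right]; nia.
case: (Z.lt_total q 0) => [h|[h|h]].
- have : q * K' <= - K' by nia.
  by lia.
- by subst q; lia.
- have : q * K' >= K' by nia.
  by lia.
Qed.

Variable ident : T -> 'I_#|T|.
Hypothesis ident_inj : injective ident.

Lemma privileged_value_stable v :
  0 <= 2 * n + 2 * Z.of_nat (diam e) * Z.of_nat (ident v) <= K - 1.
Proof.
have hv := ltn_ord (ident v); move/leP: hv => hv.
have : Z.of_nat (ident v) <= n - 1 by rewrite /nZ; lia.
have : 0 <= Z.of_nat (diam e) by lia.
by rewrite /KZ; nia.
Qed.

Lemma legitimate_safety g v w : legitimate g ->
  privilege e ident g v -> privilege e ident g w -> v = w.
Proof.
move=> hL hpv hpw; apply: NNPP => hne.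
have hr := reach_dist (e_conn v w).
have [z [q [hz hq]]] := legitimate_clock_gap hL hr.
have hdd := dist_le_diam e v w.
have hd1 : (0 < dist e v w)%nat.
  by rewrite lt0n; apply/negP => /eqP h; rewrite h /= in hr; apply: hne; apply/eqP.
rewrite /privilege in hpv hpw; rewrite hpv hpw in hq.
have hid : (ident v : nat) <> ident w by move=> h; apply: hne; apply: ident_inj; apply: val_inj.
have hv := ltn_ord (ident v); have hw := ltn_ord (ident w).
apply: (@privileged_values_apart n (Z.of_nat (diam e)) (Z.of_nat (ident v)) (Z.of_nat (ident w)) z q).
- by move/leP: hd1; move/leP: hdd; lia.
- by move/leP: hv; rewrite /nZ; lia.
- by move/leP: hw; rewrite /nZ; lia.
- by lia.
- by move/leP: hdd; lia.
- by rewrite /KZ in hq; lia.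
Qed.

Lemma legitimate_execution_spec (c : nat -> config T) (s : nat -> {set T}) :
  legitimate (c 0%nat) -> execution_did e c s -> spec_EM e ident c s.
Proof.
move=> hL0 hex.
have hv0 : valid (c 0%nat) by move=> v; have := proj1 (hL0 v); have := n_ge1; lia.
split.
  by move=> j v w; apply: legitimate_safety; apply: legitimate_closed.
move=> v i0.
have [j [hj1 hj2 hj3]] := reaches_every_value hex hv0 hL0 v (privileged_value_stable v) (nat_of_bin i0).
by exists (bin_of_nat j); rewrite bin_of_natK; split; [lia|].
Qed.

End Protocol.

Lemma spec_EM_empty (T : finType) (e : rel T) (ident : T -> 'I_#|T|) c s :
  #|T| = 0%nat -> spec_EM e ident c s.
Proof.
move=> h0; have nov (v : T) : False.
  have : (0 < #|T|)%nat by apply/card_gt0P; exists v.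
  by rewrite h0.
by split=> [i v|v]; case: (nov v).
Qed.

Theorem theorem1 (T : finType) (e : rel T)
  (e_sym : symmetric e) (e_irr : irreflexive e)
  (e_conn : forall u v : T, connect e u v)
  (ident : T -> 'I_#|T|) (ident_inj : injective ident) :
  self_stabilizing_EMSS_did e ident.
Proof.
move=> c s hv0 hex.
case: (posnP #|T|) => [h0|hpos].
  by exists 0%nat => c' s' _ _; apply: spec_EM_empty.
have [i hi] := reaches_legitimate hpos e_sym e_conn hex hv0.
exists i => c' s' h0 hex'.
by apply: (legitimate_execution_spec hpos e_sym e_conn ident_inj); rewrite ?h0.
Qed.
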